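(* Let $\alpha>-1$ and let $n\ge 0$ be an integer, and let $\lambda_s$ be the smallest eigenvalue of the real symmetric matrix $\big((\alpha+1)_{j+k}\big)_{j,k=0}^{n}$. Then \[ \lambda_s\ \ge\ \left\{\sum_{\ell=0}^{n}\frac{\ell!}{(\alpha+1)_\ell}\,\big(L_\ell^{(\alpha)}(-1)\big)^2\right\}^{-1} =\frac{(\alpha+1)_n}{(n+1)!}\cdot\frac{1}{L_n^{(\alpha+1)}(-1)\,L_n^{(\alpha)}(-1)-L_{n+1}^{(\alpha)}(-1)\,L_{n-1}^{(\alpha+1)}(-1)} . \]
   Context: $(z)_m=z(z+1)\cdots(z+m-1)$, $(z)_0=1$. The Laguerre polynomials are $L_n^{(\alpha)}(x)=\frac{(\alpha+1)_n}{n!}\sum_{k=0}^{n}\frac{(-n)_k\,x^k}{(\alpha+1)_k\,k!}$ for $n\ge0$, with the convention $L_{-1}^{(\alpha)}(x)=0$. *)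

From HB Require Import structures.
From mathcomp Require Import all_boot all_order all_algebra.
Set Implicit Arguments. Unset Strict Implicit. Unset Printing Implicit Defensive.
Import Order.TTheory GRing.Theory Num.Theory.
Local Open Scope ring_scope.

Definition poch (R : ringType) (z : R) (m : nat) : R :=
  \prod_(i < m) (z + i%:R).

Definition laguerre (R : fieldType) (n : nat) (a x : R) : R :=
  poch (a + 1) n / (n`!)%:R *
  \sum_(k < n.+1) poch (- (n%:R)) k * x ^+ k / (poch (a + 1) k * (k`!)%:R).

Definition laguerre_pred (R : fieldType) (n : nat) (a x : R) : R :=
  if n is m.+1 then laguerre m a x else 0.

Definition hankel_poch (R : ringType) (n : nat) (a : R) : 'M[R]_n.+1 :=
  \matrix_(j < n.+1, k < n.+1) poch (a + 1) (j + k).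

From HB Require Import structures.
From mathcomp Require Import all_boot all_order all_algebra.
From mathcomp Require Import ring.
Import Order.TTheory GRing.Theory Num.Theory.
Local Open Scope ring_scope.

(* Write c = a + 1 > 0.  The proof has three ingredients.
   1. Factorization.  A Chu-Vandermonde type identity (sum_binom_poch) gives
      H = L D L^T with L_{ji} = C(j,i) (c)_j/(c)_i unit lower triangular and
      D = diag(i! (c)_i); binomial inversion gives L^{-1} = M explicitly,
      M_{ij} = (-1)^{i+j} C(i,j) (c)_i/(c)_j.
   2. A general eigenvalue bound.  If L M = 1 and D > 0, every eigenvalue lam of
      L D L^T satisfies lam >= (sum_i (sum_j |M_ij|)^2 / D_i)^{-1}: for an
      eigenvector v and z = v M^T one has |v|^2 = lam sum_i z_i^2/D_i, while
      |z_i| <= |v| sum_j |M_ij|.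
   3. Laguerre polynomials at -1.  L_n^(a)(-1) = (c)_n/n! sum_j C(n,j)/(c)_j,
      so the absolute row sums of M are i! L_i^(a)(-1) and the bound of 2. is the
      sum of the theorem; two contiguous recurrences then give its closed
      Christoffel-Darboux form by induction on n. *)

Section Pochhammer.
Context {R : comNzRingType}.
Implicit Types (x : R) (j k : nat).

Lemma poch0 x : poch x 0 = 1.
Proof. by rewrite /poch big_ord0. Qed.

Lemma pochS x k : poch x k.+1 = poch x k * (x + k%:R).
Proof. by rewrite /poch big_ord_recr. Qed.

Lemma pochSl x k : poch x k.+1 = x * poch (x + 1) k.
Proof.
rewrite /poch big_ord_recl addr0; congr (_ * _); apply: eq_bigr => i _.
by rewrite lift0 -natr1 addrA (addrAC x 1).
Qed.

Lemma pochD x j k : poch x (j + k) = poch x j * poch (x + j%:R) k.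
Proof.
elim: k => [|k IH]; first by rewrite addn0 poch0 mulr1.
by rewrite addnS !pochS IH natrD addrA mulrA.
Qed.

Lemma poch_contiguous x k :
  poch (x + 1) k.+1 = poch x k.+1 + k.+1%:R * poch (x + 1) k.
Proof. rewrite (pochSl x) (pochS (x + 1)) -natr1; ring. Qed.

Lemma poch_neg_nat (l k : nat) :
  poch (- l%:R : R) k * (-1) ^+ k = ('C(l, k) * k`!)%:R.
Proof.
elim: k => [|k IH]; first by rewrite poch0 expr0 mulr1 bin0.
have -> : poch (- l%:R : R) k.+1 * (-1) ^+ k.+1
    = poch (- l%:R) k * (-1) ^+ k * (l%:R - k%:R) by rewrite pochS exprS; ring.
rewrite IH !bin_ffact ffactnSr natrM.
by case: (leqP k l) => hkl; [rewrite natrB | rewrite ffact_small ?mul0r].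
Qed.

End Pochhammer.

Section PochhammerPositive.
Context {R : numDomainType}.

Lemma poch_gt0 (x : R) k : 0 < x -> 0 < poch x k.
Proof.
move=> hx; apply: prodr_gt0 => i _.
by rewrite (lt_le_trans hx) // lerDl ler0n.
Qed.

Lemma poch_neq0 (x : R) k : 0 < x -> poch x k != 0.
Proof. by move=> hx; rewrite gt_eqF // poch_gt0. Qed.

End PochhammerPositive.

Section BinomialSums.
Context {R : comNzRingType}.

Lemma sum_binom_widen (F : nat -> R) {m N : nat} : (m < N)%N ->
  \sum_(i < N) 'C(m, i)%:R * F i = \sum_(i < m.+1) 'C(m, i)%:R * F i.
Proof.
move=> hm; rewrite (big_ord_widen N (fun i => 'C(m, i)%:R * F i) hm) [RHS]big_mkcond /=.
apply: eq_bigr => i _; case: ifP => // /negbT; rewrite -leqNgt => h.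
by rewrite bin_small ?mul0r.
Qed.

Lemma sum_binom_pascal n (f : nat -> R) :
  \sum_(j < n.+2) 'C(n.+1, j)%:R * f j =
  \sum_(j < n.+1) 'C(n, j)%:R * f j + \sum_(j < n.+1) 'C(n, j)%:R * f j.+1.
Proof.
rewrite big_ord_recl /= (eq_bigr (fun j : 'I_n.+1 =>
  'C(n, j.+1)%:R * f j.+1 + 'C(n, j)%:R * f j.+1)); last first.
  by move=> j _; rewrite binS natrD mulrDl.
rewrite big_split /= addrA; congr (_ + _).
rewrite [in RHS]big_ord_recl big_ord_recr /= (bin_small (ltnSn n)) mul0r addr0 !bin0.
by congr (_ + _); apply: eq_bigr => j _.
Qed.

Lemma binomial_inversion i j :
  \sum_(k < i.+1) 'C(i, k)%:R * ((-1) ^+ (k + j) * 'C(k, j)%:R) = (i == j)%:R :> R.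
Proof.
elim: i j => [|i IH] j.
  rewrite big_ord_recl big_ord0 addr0 /= bin0.
  by case: j => [|j]; rewrite /= ?expr0 ?mul1r ?mulr0 ?mul0r.
rewrite (sum_binom_pascal i (fun k => (-1) ^+ (k + j) * 'C(k, j)%:R)) IH.
case: j => [|j].
  rewrite (eq_bigr (fun k : 'I_i.+1 => - ('C(i, k)%:R * ((-1) ^+ (k + 0) * 'C(k, 0)%:R)))).
    by rewrite sumrN IH subrr.
  by move=> k _; rewrite !bin0 !addn0 exprS; ring.
rewrite (eq_bigr (fun k : 'I_i.+1 => 'C(i, k)%:R * ((-1) ^+ (k + j) * 'C(k, j)%:R)
    - 'C(i, k)%:R * ((-1) ^+ (k + j.+1) * 'C(k, j.+1)%:R))).
  by rewrite sumrB !IH /=; ring.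
by move=> k _; rewrite binS natrD !addnS !addSn !exprS; ring.
Qed.

End BinomialSums.

Section BinomialPochhammerSum.
Context {R : numFieldType}.
Implicit Type x : R.

(* Nonvanishing facts in the shape produced by [field]'s side conditions. *)
Lemma natS_neq0 k : 1 + k%:R != 0 :> R. Proof. by rewrite addrC natr1 pnatr_eq0. Qed.
Lemma fact_neq0 k : (k`!)%:R != 0 :> R. Proof. by rewrite pnatr_eq0 -lt0n fact_gt0. Qed.

Lemma sum_binom_poch j x k : 0 < x ->
  \sum_(i < j.+1) 'C(j, i)%:R * ('C(k, i)%:R * (i`!)%:R / poch x i)
  = poch (x + j%:R) k / poch x k.
Proof.
elim: j x k => [|j IH] x k hx.
  by rewrite big_ord_recl big_ord0 /= !bin0 !addr0 fact0 poch0 !mul1r invr1 divff ?poch_neq0.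
have hx1 : 0 < x + 1 by rewrite ltr_wpDr.
rewrite (sum_binom_pascal j (fun i => 'C(k, i)%:R * (i`!)%:R / poch x i)) IH //.
case: k => [|k].
  rewrite big1 => [|i _]; last by rewrite bin0n /= !mul0r mulr0.
  by rewrite !poch0 addr0.
rewrite (eq_bigr (fun i : 'I_j.+1 => k.+1%:R / x *
    ('C(j, i)%:R * ('C(k, i)%:R * (i`!)%:R / poch (x + 1) i)))); last first.
  move=> i _; have hb : 'C(k.+1, i.+1)%:R = k.+1%:R * 'C(k, i)%:R / i.+1%:R :> R.
    by rewrite -natrM mul_bin_diag natrM mulrC mulKf ?pnatr_eq0.
  rewrite hb factS natrM pochSl; field.
  by rewrite poch_neq0 // gt_eqF // natS_neq0.
rewrite -big_distrr /= IH // (pochSl x k) -[j.+1%:R]natr1 addrA (addrAC x 1) poch_contiguous.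
by field; rewrite poch_neq0 // gt_eqF.
Qed.

End BinomialPochhammerSum.

Section HankelLDLt.
Context {R : numFieldType}.
Implicit Types (c : R) (N : nat).

Definition hankel_lower c N : 'M[R]_N :=
  \matrix_(j < N, i < N) ('C(j, i)%:R * poch c j / poch c i).

Definition hankel_weights c N : 'rV[R]_N := \row_(i < N) ((i`!)%:R * poch c i).

Definition hankel_lower_inv c N : 'M[R]_N :=
  \matrix_(i < N, j < N) ((-1) ^+ (i + j) * 'C(i, j)%:R * poch c i / poch c j).

Lemma hankel_poch_LDLt n (a : R) : 0 < a + 1 ->
  hankel_poch n a = hankel_lower (a + 1) n.+1 *m diag_mx (hankel_weights (a + 1) n.+1)
                    *m (hankel_lower (a + 1) n.+1)^T.
Proof.
move=> hc; apply/matrixP => j k; rewrite mul_mx_diag !mxE.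
rewrite (eq_bigr (fun i : 'I_n.+1 => (poch (a + 1) j * poch (a + 1) k)
    * ('C(j, i)%:R * ('C(k, i)%:R * (i`!)%:R / poch (a + 1) i)))); last first.
  by move=> i _; rewrite !mxE; field; rewrite poch_neq0.
rewrite -big_distrr /=.
rewrite (sum_binom_widen (fun i => 'C(k, i)%:R * (i`!)%:R / poch (a + 1) i) (ltn_ord j)).
rewrite sum_binom_poch // pochD.
by field; rewrite poch_neq0.
Qed.

Lemma hankel_lowerK c N : 0 < c -> hankel_lower c N *m hankel_lower_inv c N = 1%:M.
Proof.
move=> hc; apply/matrixP => i j; rewrite !mxE.
rewrite (eq_bigr (fun k : 'I_N => (poch c i / poch c j)
    * ('C(i, k)%:R * ((-1) ^+ (k + j) * 'C(k, j)%:R)))); last first.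
  by move=> k _; rewrite !mxE; field; rewrite !poch_neq0.
rewrite -big_distrr /=.
rewrite (sum_binom_widen (fun k => (-1) ^+ (k + j) * 'C(k, j)%:R) (ltn_ord i)) binomial_inversion.
case: (eqVneq i j) => [->|hne]; first by rewrite eqxx divff ?mulr1 // poch_neq0.
by move: hne; rewrite -(inj_eq val_inj) => /negbTE ->; rewrite mulr0.
Qed.

End HankelLDLt.

Section LaguerreAtMinusOne.
Context {R : numFieldType}.
Implicit Types (a x : R) (n : nat).

Definition binom_poch_sum x n : R := \sum_(j < n.+1) 'C(n, j)%:R / poch x j.

Lemma laguerre_m1 a n : 0 < a + 1 ->
  laguerre n a (-1) = poch (a + 1) n / (n`!)%:R * binom_poch_sum (a + 1) n.
Proof.
move=> ha; rewrite /laguerre /binom_poch_sum; congr (_ * _); apply: eq_bigr => k _.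
by rewrite poch_neg_nat natrM; field; rewrite fact_neq0 poch_neq0.
Qed.

Lemma binom_poch_sumS x n : 0 < x ->
  binom_poch_sum x n.+1 = binom_poch_sum x n + binom_poch_sum (x + 1) n / x.
Proof.
move=> hx; rewrite /binom_poch_sum (sum_binom_pascal n (fun j => (poch x j)^-1)).
congr (_ + _); rewrite mulr_suml; apply: eq_bigr => j _.
by rewrite pochSl invfM mulrCA mulrC.
Qed.

(* 1/(x)_j = 1/(x+1)_j + j/(x (x+1)_j), since (x+1)_j/(x)_j = (x+j)/x. *)
Lemma inv_poch_shift x j : 0 < x ->
  (poch x j)^-1 = (poch (x + 1) j)^-1 + j%:R / (x * poch (x + 1) j).
Proof.
move=> hx; have hx1 : 0 < x + 1 by rewrite ltr_wpDr.
have hxj : 0 < x + j%:R by rewrite ltr_wpDr.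
have e : poch x j * (x + j%:R) = x * poch (x + 1) j by rewrite -pochS pochSl.
have -> : (poch x j)^-1 = (x + j%:R) / (x * poch (x + 1) j).
  by rewrite -e; field; rewrite gt_eqF ?poch_neq0.
by field; rewrite poch_neq0 // gt_eqF.
Qed.

Lemma binom_poch_sum_absorb y n : 0 < y ->
  \sum_(j < n.+2) 'C(n.+1, j)%:R * j%:R / poch y j = n.+1%:R / y * binom_poch_sum (y + 1) n.
Proof.
move=> hy; rewrite big_ord_recl /= mulr0 mul0r add0r /binom_poch_sum mulr_sumr.
apply: eq_bigr => j _ /=.
have -> : 'C(n.+1, j.+1)%:R * j.+1%:R = n.+1%:R * 'C(n, j)%:R :> R.
  by rewrite -!natrM mul_bin_diag mulnC.
by rewrite pochSl; field; rewrite poch_neq0 ?ltr_wpDr // gt_eqF.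
Qed.

Lemma binom_poch_sum_shift x n : 0 < x ->
  binom_poch_sum x n.+1
  = binom_poch_sum (x + 1) n.+1 + n.+1%:R / (x * (x + 1)) * binom_poch_sum (x + 1 + 1) n.
Proof.
move=> hx; have hx1 : 0 < x + 1 by rewrite ltr_wpDr.
rewrite /binom_poch_sum (eq_bigr (fun j : 'I_n.+2 => 'C(n.+1, j)%:R / poch (x + 1) j
    + x^-1 * ('C(n.+1, j)%:R * j%:R / poch (x + 1) j))); last first.
  by move=> j _; rewrite inv_poch_shift //; field; rewrite poch_neq0 // gt_eqF.
rewrite big_split -mulr_sumr /= binom_poch_sum_absorb //.
rewrite -/(binom_poch_sum (x + 1 + 1) n); congr (_ + _).
by field; rewrite !gt_eqF.
Qed.

End LaguerreAtMinusOne.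

Section LaguerreRecurrences.
Context {R : numFieldType}.
Implicit Types (a : R) (n : nat).

Lemma laguerre0 a (x : R) : laguerre 0 a x = 1.
Proof.
by rewrite /laguerre big_ord1 !poch0 /= fact0 expr0 !mul1r invr1 mulr1.
Qed.

Lemma laguerre_m1_degree a n : 0 < a + 1 ->
  laguerre n.+1 a (-1)
  = ((n%:R + (a + 1)) * laguerre n a (-1) + laguerre n (a + 1) (-1)) / n.+1%:R.
Proof.
move=> hc; have hc1 : 0 < a + 1 + 1 by rewrite ltr_wpDr.
rewrite !laguerre_m1 // (binom_poch_sumS _ n hc).
have -> : poch (a + 1 + 1) n = poch (a + 1) n * (a + 1 + n%:R) / (a + 1).
  by rewrite -pochS pochSl; field; rewrite gt_eqF.
by rewrite pochS factS natrM; field; rewrite fact_neq0 natS_neq0 gt_eqF.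
Qed.

Lemma laguerre_m1_param a m : 0 < a + 1 ->
  laguerre m.+1 (a + 1) (-1) = laguerre m (a + 1) (-1) + laguerre m.+1 a (-1).
Proof.
move=> hc; have hc1 : 0 < a + 1 + 1 by rewrite ltr_wpDr.
rewrite !laguerre_m1 // (binom_poch_sum_shift _ m hc) (binom_poch_sumS _ m hc1).
rewrite (pochS (a + 1 + 1)) (pochSl (a + 1) m) factS natrM.
by field; rewrite fact_neq0 natS_neq0 !gt_eqF.
Qed.

Lemma sum_laguerre_m1_sq a n : 0 < a + 1 ->
  \sum_(l < n.+1) (l`!)%:R / poch (a + 1) l * (laguerre l a (-1)) ^+ 2
  = (n`!)%:R / poch (a + 1) n * ((1 - a) * laguerre n (a + 1) (-1) * laguerre n a (-1)
     + (n%:R + (a + 1)) * laguerre n a (-1) ^+ 2 - laguerre n (a + 1) (-1) ^+ 2).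
Proof.
move=> hc; elim: n => [|n IH].
  by rewrite big_ord1 !laguerre0 fact0 poch0; field.
rewrite big_ord_recr /= IH laguerre_m1_param // laguerre_m1_degree // pochS factS natrM.
by field; rewrite natS_neq0 poch_neq0 // gt_eqF // ltr_wpDr.
Qed.

Lemma christoffel_darboux_m1 a n : 0 < a + 1 ->
  \sum_(l < n.+1) (l`!)%:R / poch (a + 1) l * (laguerre l a (-1)) ^+ 2
  = ((n.+1)`!)%:R / poch (a + 1) n * (laguerre n (a + 1) (-1) * laguerre n a (-1)
     - laguerre n.+1 a (-1) * laguerre_pred n (a + 1) (-1)).
Proof.
move=> hc; have -> : laguerre_pred n (a + 1) (-1) = laguerre n (a + 1) (-1) - laguerre n a (-1).
  case: n => [|m] /=; first by rewrite !laguerre0 subrr.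
  by rewrite laguerre_m1_param // addrK.
rewrite sum_laguerre_m1_sq // laguerre_m1_degree // factS natrM.
by field; rewrite natS_neq0 poch_neq0.
Qed.

End LaguerreRecurrences.

Lemma hankel_lower_inv_row_sum {R : numFieldType} n (a : R) (i : 'I_n.+1) : 0 < a + 1 ->
  \sum_(j < n.+1) `|hankel_lower_inv (a + 1) n.+1 i j| = (i`!)%:R * laguerre i a (-1).
Proof.
move=> hc; have hp k : 0 <= poch (a + 1) k by exact/ltW/poch_gt0.
rewrite (eq_bigr (fun j : 'I_n.+1 => 'C(i, j)%:R * (poch (a + 1) i / poch (a + 1) j))).
  rewrite (sum_binom_widen (fun j => poch (a + 1) i / poch (a + 1) j) (ltn_ord i)).
  rewrite laguerre_m1 // /binom_poch_sum [RHS]mulrA [RHS]mulr_sumr.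
  by apply: eq_bigr => j _; field; rewrite fact_neq0 poch_neq0.
move=> j _; rewrite mxE !normrM normrX normrN normr1 expr1n mul1r mulrA.
by rewrite !ger0_norm ?invr_ge0.
Qed.

Section LDLtEigenvalueBound.
Context {R : rcfType} {N : nat}.
Context {L M : 'M[R]_N} {d : 'rV[R]_N}.
Hypotheses (LK : L *m M = 1%:M) (d_gt0 : forall i, 0 < d 0 i).

Lemma sqr_coord_le_norm (v : 'rV[R]_N) i : v 0 i ^+ 2 <= \sum_(k < N) v 0 k ^+ 2.
Proof. by rewrite (bigD1 i) //= lerDl sumr_ge0 // => k _; exact: sqr_ge0. Qed.

Lemma LDLt_rayleigh (v : 'rV[R]_N) lam :
  v *m (L *m diag_mx d *m L^T) = lam *: v ->
  \sum_(i < N) v 0 i ^+ 2 = lam * \sum_(i < N) (v *m M^T) 0 i ^+ 2 / d 0 i.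
Proof.
move=> hv; set z := v *m M^T; set y := v *m L.
have ML : M *m L = 1%:M := mulmx1C LK.
have hzy : y *m diag_mx d = lam *: z.
  by rewrite /z /y scalemxAl -hv -!mulmxA -trmx_mul ML trmx1 mulmx1.
have hvv : v *m v^T = z *m y^T.
  by rewrite /z /y trmx_mul -mulmxA (mulmxA M^T) -trmx_mul LK trmx1 mul1mx.
have /(congr1 (fun A : 'M_1 => A 0 0)) := hvv; rewrite !mxE => e.
rewrite (eq_bigr (fun i => v 0 i * v^T i 0)); last by move=> i _; rewrite mxE expr2.
rewrite e mulr_sumr; apply: eq_bigr => i _.
have /(congr1 (fun A : 'rV_N => A 0 i)) := hzy; rewrite mul_mx_diag [LHS]mxE [RHS]mxE => yi.
have d0 := d_gt0 i; rewrite [y^T i 0]mxE -[y 0 i](mulfK (lt0r_neq0 d0)) yi.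
by field; rewrite gt_eqF.
Qed.

Lemma coord_mulmx_tr_le (v : 'rV[R]_N) i :
  (v *m M^T) 0 i ^+ 2 <= (\sum_(k < N) v 0 k ^+ 2) * (\sum_(j < N) `|M i j|) ^+ 2.
Proof.
set Nv := \sum_(k < N) v 0 k ^+ 2.
have Nv_ge0 : 0 <= Nv by apply: sumr_ge0 => k _; exact: sqr_ge0.
have hvj j : `|v 0 j| <= Num.sqrt Nv by rewrite -sqrtr_sqr ler_sqrt ?sqr_coord_le_norm.
have hz : `|(v *m M^T) 0 i| <= Num.sqrt Nv * \sum_(j < N) `|M i j|.
  rewrite mxE mulr_sumr; apply: le_trans (ler_norm_sum _ _ _) _; apply: ler_sum => j _.
  by rewrite mxE normrM ler_wpM2r.
rewrite -real_normK ?num_real // -[Nv]sqr_sqrtr // -exprMn.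
by rewrite ler_sqr ?nnegrE ?mulr_ge0 ?sumr_ge0 ?sqrtr_ge0.
Qed.

Lemma LDLt_eigenvalue_ge lam :
  eigenvalue (L *m diag_mx d *m L^T) lam ->
  (\sum_(i < N) (\sum_(j < N) `|M i j|) ^+ 2 / d 0 i)^-1 <= lam.
Proof.
case/eigenvalueP => v hv v_neq0.
set S := \sum_(i < N) _; set Nv := \sum_(k < N) v 0 k ^+ 2.
set Q := \sum_(i < N) (v *m M^T) 0 i ^+ 2 / d 0 i.
have NvQ : Nv = lam * Q := LDLt_rayleigh v lam hv.
have Q_ge0 : 0 <= Q by apply: sumr_ge0 => i _; rewrite mulr_ge0 ?sqr_ge0 ?invr_ge0 ?ltW.
have QS : Q <= Nv * S.
  rewrite mulr_sumr; apply: ler_sum => i _; rewrite mulrA.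
  by apply: ler_wpM2r; [rewrite invr_ge0 ltW | exact: coord_mulmx_tr_le].
have Nv_gt0 : 0 < Nv.
  have [i vi] : exists i, v 0 i != 0.
    apply/existsP; apply: contraNT v_neq0; rewrite negb_exists => /forallP v0.
    by apply/eqP/rowP => i; rewrite mxE; apply/eqP/negPn/v0.
  by apply: lt_le_trans (sqr_coord_le_norm v i); rewrite lt0r sqr_ge0 andbT sqrf_eq0.
have Q_gt0 : 0 < Q.
  by rewrite lt_def Q_ge0 andbT; apply: contraTneq Nv_gt0; rewrite NvQ => ->; rewrite mulr0 ltxx.
have lam_gt0 : 0 < lam by rewrite -(pmulr_lgt0 _ Q_gt0) -NvQ.
have lamS : 1 <= lam * S.
  have : Nv * 1 <= Nv * (lam * S) by rewrite mulr1 mulrCA {1}NvQ ler_pM2l.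
  by rewrite ler_pM2l.
have S_gt0 : 0 < S by rewrite -(pmulr_rgt0 _ lam_gt0) (lt_le_trans ltr01).
by rewrite -(ler_pM2r S_gt0) mulVf ?gt_eqF.
Qed.

End LDLtEigenvalueBound.

Theorem mainTheorem3 (R : rcfType) (a : R) (n : nat) (ha : -1 < a) :
  (forall lam : R, eigenvalue (hankel_poch n a) lam ->
     (\sum_(l < n.+1) (l`!)%:R / poch (a + 1) l * (laguerre l a (-1)) ^+ 2)^-1
       <= lam)
  /\
  (\sum_(l < n.+1) (l`!)%:R / poch (a + 1) l * (laguerre l a (-1)) ^+ 2)^-1
  = poch (a + 1) n / ((n.+1)`!)%:R *
    (laguerre n (a + 1) (-1) * laguerre n a (-1)
     - laguerre n.+1 a (-1) * laguerre_pred n (a + 1) (-1))^-1.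
Proof.
have hc : 0 < a + 1 by rewrite -ltrBlDr sub0r.
split; last by rewrite christoffel_darboux_m1 // invfM invf_div.
have weights_gt0 i : 0 < hankel_weights (a + 1) n.+1 0 i.
  by rewrite mxE mulr_gt0 ?ltr0n ?fact_gt0 ?poch_gt0.
move=> lam; rewrite hankel_poch_LDLt //.
move=> /(LDLt_eigenvalue_ge (hankel_lowerK _ _ hc) weights_gt0).
congr (_^-1 <= _); apply: eq_bigr => i _.
rewrite hankel_lower_inv_row_sum // mxE.
by field; rewrite fact_neq0 poch_neq0.
Qed.
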